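(* Let $\mathbf{B}_{\mathrm{lat}}$ be the (opposite) incidence coalgebra of the lattices of noncrossing partitions and $\mathbf{B}_{\mathrm{opd}}$ the block-substitution bialgebra of noncrossing partitions (both defined in the context). The linear map $\Phi:\mathbf{B}_{\mathrm{lat}}\to\mathbf{B}_{\mathrm{opd}}$ defined by $\Phi(\llbracket P,Q\rrbracket)=P/Q$ is a coalgebra homomorphism.
   Context: For $n\geq1$, $\operatorname{NCP}(n)$ denotes the set of noncrossing partitions of $[n]$ (no $a<c<b<d$ with $a,b$ in one block and $c,d$ in another), ordered by refinement: $P\leq Q$ if each block of $Q$ is a union of blocks of $P$. Partitions of finite linearly ordered sets are identified with partitions of $[m]$ via the order-preserving bijection, and $P_{|X}$ denotes the induced partition on $X$. $\mathbf{B}_{\mathrm{opd}}$ is the free commutative unital algebra generated by all nonempty noncrossing partitions; for $P\leq Q$ in $\operatorname{NCP}(n)$ with $Q=\{\tau_1,\dots,\tau_l\}$, $P/Q:=P_{|\tau_1}\cdots P_{|\tau_l}\in\mathbf{B}_{\mathrm{opd}}$. Its coproduct is $\delta(P)=\sum_{Q\in\operatorname{NCP}(n),\,Q\geq P}Q\otimes P/Q$, extended multiplicatively, and its counit is $\varepsilon(P)=1$ if $P$ has exactly one block and $0$ otherwise. $\mathbf{B}_{\mathrm{lat}}$ is the vector space with basis all intervals $\llbracket P,Q\rrbracket=\{M: P\leq M\leq Q\}$ with $P\leq Q$ in $\operatorname{NCP}(n)$, $n\geq1$, with coproduct $\llbracket P,Q\rrbracket\mapsto\sum_{M\in\llbracket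 P,Q\rrbracket}\llbracket M,Q\rrbracket\otimes\llbracket P,M\rrbracket$ (the opposite of the usual incidence coproduct) and counit $\llbracket P,Q\rrbracket\mapsto\delta_{P,Q}$. *)

From mathcomp Require Import all_boot all_order all_algebra.
Set Implicit Arguments. Unset Strict Implicit. Unset Printing Implicit Defensive.
Import GRing.Theory.
Local Open Scope ring_scope.

(* Set partitions of [n] are represented as sets of blocks over 'I_n
   (the point i : 'I_n stands for i+1 in [n]). *)

Definition noncrossing (n : nat) (P : {set {set 'I_n}}) : bool :=
  [forall B in P, forall C in P, (B != C) ==>
     ~~ [exists a : 'I_n, exists b : 'I_n, exists c : 'I_n, exists d : 'I_n,
          [&& (a < c)%N, (c < b)%N, (b < d)%N,
              a \in B, b \in B, c \in C & d \in C]]].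

Definition is_ncp (n : nat) (P : {set {set 'I_n}}) : bool :=
  partition P [set: 'I_n] && noncrossing P.

Definition ncp_le (n : nat) (P Q : {set {set 'I_n}}) : bool :=
  [forall C in Q, C == \bigcup_(B in P | B \subset C) B].

Definition ncp_interval (n : nat) (P Q : {set {set 'I_n}}) : seq {set {set 'I_n}} :=
  [seq M <- enum [set: {set {set 'I_n}}] |
     [&& is_ncp M, ncp_le P M & ncp_le M Q ]].

Definition ncp_above (n : nat) (P : {set {set 'I_n}}) : seq {set {set 'I_n}} :=
  [seq Q <- enum [set: {set {set 'I_n}}] | is_ncp Q && ncp_le P Q ].

(* A (possibly non-valid) partition of some [n]: the generators of B_opd
   and basis elements are the valid ones. *)
Definition part := {n : nat & {set {set 'I_n}}}.
Definition mkpart (n : nat) (P : {set {set 'I_n}}) : part :=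
  Tagged (fun m => {set {set 'I_m}}) P.

(* rank of x in X (order-preserving bijection X -> [#|X|]) *)
Definition rk (n : nat) (X : {set 'I_n}) (x : 'I_n) : nat :=
  #|[set y in X | (y < x)%N]|.

(* induced partition P_{|X}, transported to [#|X|] *)
Definition restr (n : nat) (P : {set {set 'I_n}}) (X : {set 'I_n}) : part :=
  @mkpart #|X|
    [set [set i : 'I_#|X| | [exists x in B :&: X, rk X x == i]]
       | B in P & B :&: X != set0].

(* Monomials of B_opd (commutative products of generators) are represented
   by sequences of generators, considered up to permutation. *)
Definition monomial := seq part.

Definition quot (n : nat) (P Q : {set {set 'I_n}}) : monomial :=
  [seq restr P tau | tau <- enum Q].

(* Elements of B_opd (x) B_opd with coefficients in N are represented as
   formal sums (seqs) of pure tensors of monomials. *)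
Definition tens := (monomial * monomial)%type.

Definition tens_equiv (x y : tens) : bool :=
  perm_eq x.1 y.1 && perm_eq x.2 y.2.

Definition coef (k : nzRingType) (b : tens) (s : seq tens) : k :=
  \sum_(x <- s) (tens_equiv x b)%:R.

Definition delta_gen (p : part) : seq tens :=
  [seq ([:: mkpart Q], quot (tagged p) Q) | Q <- ncp_above (tagged p)].

Definition delta_mono (m : monomial) : seq tens :=
  foldr (fun p acc => [seq (x.1 ++ y.1, x.2 ++ y.2) | x <- delta_gen p, y <- acc])
        [:: ([::], [::])] m.

Definition eps_mono (k : nzRingType) (m : monomial) : k :=
  \prod_(p <- m) (#|tagged p| == 1%N)%:R.

(* (Phi (x) Phi) applied to the coproduct of B_lat on [[P,Q]]:
   sum_{M in [[P,Q]]} Phi[[M,Q]] (x) Phi[[P,M]] *)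
Definition lat_delta_Phi (n : nat) (P Q : {set {set 'I_n}}) : seq tens :=
  [seq (quot M Q, quot P M) | M <- ncp_interval P Q].

From mathcomp Require Import all_boot all_order all_algebra.
Import GRing.Theory.
Set Implicit Arguments. Unset Strict Implicit. Unset Printing Implicit Defensive.

(* The interval [[P, Q]] is a product over the blocks t of Q: a noncrossing M
   with P <= M <= Q is the same thing as a choice, for every t, of a
   noncrossing partition of t coarser than P_{|t} (namely M_{|t}), and for a
   block B of M inside t, P_{|B} can be computed inside t.  Expanding
   delta(P/Q) = prod_t delta(P_{|t}) = prod_t sum_{Q_t >= P_{|t}} Q_t (x) P_{|t}/Q_t
   and gluing the Q_t into M turns every term into M/Q (x) P/M, bijectively.
   For the counit, every P_{|t} has a single block iff every block of Q is a
   block of P, i.e. iff P = Q. *)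

Section OrderEmbedding.
Variable n : nat.
Implicit Types (X B : {set 'I_n}) (s : seq 'I_n).

Local Notation ltv := (fun x y : 'I_n => (x < y)%N).

Definition emb X : 'I_#|X| -> 'I_n := enum_val.
Arguments emb : clear implicits.

Lemma ltv_trans : transitive ltv.
Proof. by move=> ? ? ?; apply: ltn_trans. Qed.

Lemma sorted_enum_set X : sorted ltv (enum X).
Proof.
have -> : enum X = filter (mem X) (enum 'I_n) by rewrite enumT.
apply: sorted_filter; first exact: ltv_trans.
by have := iota_ltn_sorted 0 n; rewrite -val_enum_ord sorted_map; apply: sub_sorted => a b.
Qed.

Lemma index_sorted s x : sorted ltv s -> x \in s ->
  index x s = count (fun y : 'I_n => (y < x)%N) s.
Proof.
elim: s => [//|a s IHs] s_sorted; rewrite inE /=.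
have a_min : all (fun y : 'I_n => (a < y)%N) s.
  exact: order_path_min ltv_trans s_sorted.
have [-> _|_ /= xs] := eqVneq x a.
  rewrite /= ltnn add0n; apply/esym/eqP; rewrite -leqn0 leqNgt -has_count.
  by apply/hasPn => y /(allP a_min); rewrite -leqNgt => /ltnW.
by rewrite IHs ?(path_sorted s_sorted) // (allP a_min x xs).
Qed.

Lemma emb_inj X : injective (emb X).
Proof. exact: enum_val_inj. Qed.

Lemma emb_mem X i : emb X i \in X.
Proof. exact: enum_valP. Qed.

Lemma emb_onto X x : x \in X -> exists i, x = emb X i.
Proof. by move=> Xx; exists (enum_rank_in Xx x); rewrite /emb enum_rankK_in. Qed.

Lemma ltn_emb X (i j : 'I_#|X|) : (emb X i < emb X j)%N = (i < j)%N.
Proof.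
have emb_lt (i' j' : 'I_#|X|) : (i' < j')%N -> (emb X i' < emb X j')%N.
  move=> lt_ij; rewrite /emb !(enum_val_nth (emb X i')).
  by apply: (sorted_ltn_nth ltv_trans _ (sorted_enum_set X)); rewrite ?inE -?cardE.
case: (ltngtP i j) => [/emb_lt -> // | /emb_lt lt_ji | /val_inj ->].
  by apply/negbTE; rewrite -leqNgt ltnW.
by rewrite ltnn.
Qed.

Lemma rk_emb X i : rk X (emb X i) = i.
Proof.
have -> : rk X (emb X i) = count (fun y : 'I_n => (y < emb X i)%N) (enum X).
  rewrite /rk cardE /enum_mem -size_filter -filter_predI; congr size.
  by apply: eq_filter => y; rewrite !inE andbC.
rewrite -index_sorted ?sorted_enum_set ?mem_enum ?emb_mem //.
by rewrite /emb (enum_val_nth (emb X i)) index_uniq ?enum_uniq // -cardE.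
Qed.

Lemma imset_emb_preimset X B : emb X @: (emb X @^-1: B) = B :&: X.
Proof.
apply/setP => x; rewrite inE; apply/imsetP/andP => [[i] | [Bx /emb_onto [i Ex]]].
  by rewrite inE => Bi ->; rewrite Bi emb_mem.
by exists i; rewrite // inE -Ex.
Qed.

Lemma preimset_emb_imset X (B' : {set 'I_#|X|}) : emb X @^-1: (emb X @: B') = B'.
Proof. by apply/setP => i; rewrite inE (mem_imset _ _ (@emb_inj X)). Qed.

End OrderEmbedding.
Arguments emb {n} X.

Section SetPartitions.
Variable T : finType.
Implicit Types (P Q : {set {set T}}) (B C : {set T}).

Lemma partitionT_intro P :
  (forall x, exists2 B, B \in P & x \in B) ->
  (forall B C x, B \in P -> C \in P -> x \in B -> x \in C -> B = C) ->
  set0 \notin P -> partition P setT.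
Proof.
move=> covP block_eq P0; apply/and3P; split=> //.
  apply/eqP/setP => x; rewrite inE; have [B PB Bx] := covP x.
  by apply/bigcupP; exists B.
apply/trivIsetP => B C PB PC; rewrite -setI_eq0; apply: contraR.
by case/set0Pn => x /setIP [Bx Cx]; rewrite (block_eq B C x).
Qed.

Lemma partition_cover P x : partition P setT -> exists2 B, B \in P & x \in B.
Proof.
case/and3P => /eqP covP _ _; have Px : x \in cover P by rewrite covP inE.
by exists (pblock P x); rewrite ?pblock_mem ?mem_pblock.
Qed.

Lemma partition_block_eq P B C x :
  partition P setT -> B \in P -> C \in P -> x \in B -> x \in C -> B = C.
Proof.
by case/and3P => _ tiP _ PB PC Bx Cx; rewrite -(def_pblock tiP PB Bx) (def_pblock tiP PC Cx).
Qed.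

Lemma partition_block_neq0 P B : partition P setT -> B \in P -> B != set0.
Proof. by case/and3P => _ _ P0 PB; apply: contraNneq P0 => <-. Qed.

Lemma partition_sub_eq P Q : partition P setT -> partition Q setT -> Q \subset P -> P = Q.
Proof.
move=> partP partQ /subsetP QP; apply/setP => B; apply/idP/idP => [PB|/QP //].
have /set0Pn [x Bx] := partition_block_neq0 partP PB.
have [C QC Cx] := partition_cover x partQ.
by rewrite (partition_block_eq partP PB (QP C QC) Bx Cx).
Qed.

Lemma partition_disjoint Q (t1 t2 B : {set T}) :
  partition Q setT -> t1 \in Q -> t2 \in Q -> t1 != t2 -> B \subset t1 -> B :&: t2 = set0.
Proof.
move=> partQ Qt1 Qt2 neq12 Bt1; apply/setP => x; rewrite !inE.
apply: contraNF neq12 => /andP [Bx t2x].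
by rewrite (partition_block_eq partQ Qt1 Qt2 (subsetP Bt1 x Bx) t2x).
Qed.

End SetPartitions.

Section NoncrossingPartitions.
Variable n : nat.
Implicit Types (P Q R : {set {set 'I_n}}) (B C : {set 'I_n}).

Lemma ncp_leP P Q : partition P setT -> partition Q setT ->
  reflect (forall B, B \in P -> exists2 C, C \in Q & B \subset C) (ncp_le P Q).
Proof.
move=> partP partQ; apply: (iffP forall_inP) => [lePQ B PB | subPQ C QC].
  have /set0Pn [x Bx] := partition_block_neq0 partP PB.
  have [C QC Cx] := partition_cover x partQ; exists C => //.
  move: Cx; rewrite {1}(eqP (lePQ C QC)) => /bigcupP [B' /andP [PB' B'C] B'x].
  by rewrite (partition_block_eq partP PB PB' Bx B'x).
apply/eqP/setP => x; apply/idP/bigcupP => [Cx | [B /andP [_ BC] /(subsetP BC) //]].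
have [B PB Bx] := partition_cover x partP; exists B; rewrite // PB /=.
have [C' QC' BC'] := subPQ B PB.
by rewrite (partition_block_eq partQ QC QC' Cx (subsetP BC' x Bx)).
Qed.

Lemma ncp_le_block_sub P Q B C x : partition P setT -> partition Q setT -> ncp_le P Q ->
  B \in P -> C \in Q -> x \in B -> x \in C -> B \subset C.
Proof.
move=> partP partQ /(ncp_leP partP partQ) subPQ PB QC Bx Cx.
have [C' QC' BC'] := subPQ B PB.
by rewrite (partition_block_eq partQ QC QC' Cx (subsetP BC' x Bx)).
Qed.

Lemma noncrossingP R : reflect
  (forall B C (a b c d : 'I_n), B \in R -> C \in R -> B != C ->
     (a < c < b)%N -> (b < d)%N -> a \in B -> b \in B -> c \in C -> d \in C -> False)
  (noncrossing R).
Proof.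
apply: (iffP forall_inP) => [ncR B C a b c d RB RC neqBC /andP [ac cb] bd aB bB cC dC
                           | crossR B RB].
  have /forall_inP /(_ C RC) := ncR B RB; rewrite neqBC => /negP; apply.
  by apply/existsP; exists a; apply/existsP; exists b; apply/existsP; exists c;
     apply/existsP; exists d; rewrite ac cb bd aB bB cC dC.
apply/forall_inP => C RC; apply/implyP => neqBC.
apply/negP => /existsP [a /existsP [b /existsP [c /existsP [d]]]].
case/and5P => ac cb bd aB /and3P [bB cC dC].
by apply: (crossR B C a b c d); rewrite ?ac.
Qed.

Lemma mem_ncp_above R (S : {set {set 'I_n}}) : (S \in ncp_above R) = is_ncp S && ncp_le R S.
Proof. by rewrite mem_filter mem_enum inE andbT. Qed.

Lemma mem_ncp_interval P Q (M : {set {set 'I_n}}) :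
  (M \in ncp_interval P Q) = [&& is_ncp M, ncp_le P M & ncp_le M Q].
Proof. by rewrite mem_filter mem_enum inE andbT. Qed.

End NoncrossingPartitions.

Definition induced n (X : {set 'I_n}) (R : {set {set 'I_n}}) : {set {set 'I_#|X|}} :=
  [set emb X @^-1: B | B : {set 'I_n} in R & B :&: X != set0].

Definition lift n (X : {set 'I_n}) (R' : {set {set 'I_#|X|}}) : {set {set 'I_n}} :=
  [set emb X @: B' | B' : {set 'I_#|X|} in R'].
Arguments lift {n} X R'.

Section InducedPartitions.
Variable n : nat.
Implicit Types (X Y B C : {set 'I_n}) (R : {set {set 'I_n}}).

Lemma restrE R X : restr R X = mkpart (induced X R).
Proof.
congr mkpart; apply: eq_imset => B; apply/setP => i; rewrite !inE.
apply/existsP/idP => [[x /andP [/setIP [Bx Xx] /eqP rk_x]] | Bi].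
  by case: (emb_onto Xx) rk_x Bx => j ->; rewrite rk_emb => /val_inj ->.
by exists (emb X i); rewrite inE Bi emb_mem rk_emb /=.
Qed.

Lemma mem_induced R X B : B \in R -> B :&: X != set0 -> emb X @^-1: B \in induced X R.
Proof. by move=> RB BX; apply/imsetP; exists B; rewrite // inE RB. Qed.

Lemma lift_induced R X :
  lift X (induced X R) = [set B :&: X | B : {set 'I_n} in R & B :&: X != set0].
Proof.
by rewrite /lift /induced -imset_comp; apply: eq_imset => B; apply: imset_emb_preimset.
Qed.

Lemma induced_lift X (R' : {set {set 'I_#|X|}}) : set0 \notin R' -> induced X (lift X R') = R'.
Proof.
move=> R'0; apply/setP => B'; apply/imsetP/idP => [[B] | R'B'].
  by rewrite inE => /andP [/imsetP [C' R'C' ->] _] ->; rewrite preimset_emb_imset.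
exists (emb X @: B'); last by rewrite preimset_emb_imset.
rewrite inE mem_imset ?R'B' /=; last exact: imset_inj (@emb_inj _ X).
have /setIidPl -> : emb X @: B' \subset X.
  by apply/subsetP => x /imsetP [i _ ->]; apply: emb_mem.
by rewrite imset_eq0; apply: contraNneq R'0 => <-.
Qed.

Lemma induced_block R X : partition R setT -> X \in R -> induced X R = [set setT].
Proof.
move=> partR RX; apply/setP => B'; rewrite inE; apply/imsetP/eqP => [[B] | ->].
  rewrite inE => /andP [RB /set0Pn [x /setIP [Bx Xx]]] ->.
  by rewrite (partition_block_eq partR RB RX Bx Xx); apply/setP => i; rewrite !inE emb_mem.
exists X; first by rewrite inE RX setIid (partition_block_neq0 partR RX).
by apply/setP => i; rewrite !inE emb_mem.
Qed.

Lemma is_ncp_induced R X : is_ncp R -> is_ncp (induced X R).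
Proof.
case/andP => partR /noncrossingP ncR; apply/andP; split.
  apply: partitionT_intro.
  - move=> i; have [B RB Bi] := partition_cover (emb X i) partR.
    by exists (emb X @^-1: B); rewrite ?inE // mem_induced //; apply/set0Pn; exists (emb X i);
       rewrite inE Bi emb_mem.
  - move=> _ _ i /imsetP [B1 + ->] /imsetP [B2 + ->]; rewrite !inE.
    by case/andP => RB1 _ /andP [RB2 _] B1i B2i; rewrite (partition_block_eq partR RB1 RB2 B1i B2i).
  apply/imsetP => [[B]]; rewrite inE => /andP [RB /set0Pn [x /setIP [Bx /emb_onto [i Ex]]]].
  by move/setP/(_ i); rewrite !inE -Ex Bx.
apply/noncrossingP => _ _ a b c d /imsetP [B1 + ->] /imsetP [B2 + ->]; rewrite !inE.
case/andP => RB1 _ /andP [RB2 _] neqB12 acb bd aB1 bB1 cB2 dB2.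
apply: (ncR B1 B2 (emb X a) (emb X b) (emb X c) (emb X d)); rewrite ?ltn_emb //.
by apply: contraNneq neqB12 => ->.
Qed.

Lemma restr_setU (R1 R2 : {set {set 'I_n}}) X :
  (forall B, B \in R2 -> B :&: X = set0) -> restr (R1 :|: R2) X = restr R1 X.
Proof.
move=> R2X0; rewrite !restrE; congr mkpart; apply/setP => B'.
apply/imsetP/imsetP => [[B] | [B]]; rewrite !inE; last first.
  by case/andP => R1B BX ->; exists B; rewrite // !inE R1B.
case/andP => /orP [R1B | R2B] BX ->; first by exists B; rewrite // inE R1B.
by move: BX; rewrite R2X0 ?eqxx.
Qed.

End InducedPartitions.

Section InducedTwice.
Variable n : nat.
Variables (X : {set 'I_n}) (Y' : {set 'I_#|X|}).
Implicit Types (B : {set 'I_n}) (R : {set {set 'I_n}}).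
Local Notation Y := (emb X @: Y').

Lemma imset_emb_sub : Y \subset X.
Proof. by apply/subsetP => x /imsetP [i _ ->]; apply: emb_mem. Qed.

Lemma enum_imset_emb : map (emb X) (enum Y') = enum Y.
Proof.
apply: (irr_sorted_eq (@ltv_trans n)) => [x||| x]; rewrite ?ltnn ?sorted_enum_set //.
  by rewrite sorted_map; apply: sub_sorted (sorted_enum_set Y') => i j /=; rewrite ltn_emb.
rewrite mem_enum; apply/mapP/imsetP => [[i] | [i]]; rewrite ?mem_enum => Y'i ->.
all: by exists i; rewrite ?mem_enum.
Qed.

Lemma emb_imset_emb (i : 'I_#|Y'|) (j : 'I_#|Y|) : val i = val j -> emb Y j = emb X (emb Y' i).
Proof.
move=> eq_ij; rewrite /emb (enum_val_nth (emb X (emb Y' i))) -enum_imset_emb.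
rewrite (nth_map (emb Y' i)) -eq_ij -?cardE ?ltn_ord //.
by rewrite -(enum_val_nth (emb Y' i)).
Qed.

Lemma imset_emb_preimsetI B : emb X @: (emb X @^-1: B :&: Y') = B :&: Y.
Proof.
rewrite imsetI; last by move=> i j _ _; apply: emb_inj.
by rewrite imset_emb_preimset -setIA (setIidPr imset_emb_sub).
Qed.

Lemma lift_induced_twice R :
  [set emb X @: (emb Y' @: Z) | Z : {set 'I_#|Y'|} in induced Y' (induced X R)] =
  lift Y (induced Y R).
Proof.
rewrite lift_induced; apply/setP => S; apply/imsetP/imsetP => [[Z] | [B]].
  case/imsetP => B' + -> ->; rewrite inE => /andP [/imsetP [B + ->]].
  rewrite inE imset_emb_preimset imset_emb_preimsetI => /andP [RB _] BY.
  by exists B; rewrite // inE RB -imset_emb_preimsetI imset_eq0.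
rewrite inE => /andP [RB BY] ->; exists (emb Y' @^-1: (emb X @^-1: B)).
  have BY' : emb X @^-1: B :&: Y' != set0 by rewrite -(imset_eq0 (emb X)) imset_emb_preimsetI.
  rewrite mem_induced // mem_induced //; apply: contraNneq BY => BX0.
  by rewrite -(setIidPr imset_emb_sub) setIA BX0 set0I.
by rewrite imset_emb_preimset imset_emb_preimsetI.
Qed.

End InducedTwice.

Lemma mkpart_eq_imset n m1 m2 (A1 : {set {set 'I_m1}}) (A2 : {set {set 'I_m2}})
    (f1 : 'I_m1 -> 'I_n) (f2 : 'I_m2 -> 'I_n) :
  m1 = m2 -> (forall i j, val i = val j -> f1 i = f2 j) -> injective f1 ->
  [set f1 @: Z | Z : {set 'I_m1} in A1] = [set f2 @: Z | Z : {set 'I_m2} in A2] ->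
  mkpart A1 = mkpart A2.
Proof.
move=> eq_m; subst m2 => eq_f inj_f1 eq_A; congr mkpart.
apply: (imset_inj (imset_inj inj_f1)); rewrite eq_A.
by apply: eq_imset => Z; apply: eq_imset => i; rewrite (eq_f i i).
Qed.

Lemma restr_induced n (R : {set {set 'I_n}}) (X : {set 'I_n}) (Y' : {set 'I_#|X|}) :
  restr (induced X R) Y' = restr R (emb X @: Y').
Proof.
rewrite !restrE; apply: (mkpart_eq_imset (f1 := emb X \o emb Y') (f2 := emb (emb X @: Y'))).
- by rewrite card_imset //; apply: emb_inj.
- by move=> i j /emb_imset_emb ->.
- by move=> i j /emb_inj /emb_inj.
have := lift_induced_twice Y' R; rewrite /lift => <-.
by apply: eq_imset => Z; apply: imset_comp.
Qed.

Lemma quot_setU n (R M1 M2 : {set {set 'I_n}}) : [disjoint M1 & M2] ->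
  perm_eq (quot R (M1 :|: M2)) (quot R M1 ++ quot R M2).
Proof.
move=> disj; rewrite /quot -map_cat; apply: perm_map.
apply: perm_trans (enum_setU M1 M2) _; rewrite undup_id //.
rewrite cat_uniq !enum_uniq andbT /=; apply/hasPn => B; rewrite !mem_enum => M2B.
by apply: contraL disj => M1B; apply/pred0Pn; exists B; apply/andP.
Qed.

Lemma perm_enum_lift n (X : {set 'I_n}) (R' : {set {set 'I_#|X|}}) :
  perm_eq [seq emb X @: B' | B' : {set 'I_#|X|} <- enum R'] (enum (lift X R')).
Proof.
apply: uniq_perm; rewrite ?enum_uniq //.
  by rewrite map_inj_uniq ?enum_uniq //; apply/imset_inj/emb_inj.
move=> B; rewrite mem_enum; apply/mapP/imsetP => [[B'] | [B']]; rewrite ?mem_enum => R'B' ->.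
all: by exists B'; rewrite ?mem_enum.
Qed.

Lemma perm_quot_lift n (R : {set {set 'I_n}}) (X : {set 'I_n}) (R' : {set {set 'I_#|X|}}) :
  perm_eq (quot (induced X R) R') (quot R (lift X R')).
Proof.
rewrite /quot (eq_map (fun B' => restr_induced R B')) map_comp.
exact: perm_map (perm_enum_lift R').
Qed.

(* Sorting by [pickle] picks a representative of each monomial up to
   permutation, so [tens_equiv] becomes equality of [canon]. *)
Definition canon_mono (m : monomial) : monomial :=
  sort (fun p q : part => (pickle p <= pickle q)%N) m.

Definition canon (x : tens) : tens := (canon_mono x.1, canon_mono x.2).

Definition eq_sum (s1 s2 : seq tens) : bool := perm_eq (map canon s1) (map canon s2).

Definition tens_mul (s1 s2 : seq tens) : seq tens :=
  [seq (x.1 ++ y.1, x.2 ++ y.2) | x <- s1, y <- s2].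

Lemma delta_mono_cons p m : delta_mono (p :: m) = tens_mul (delta_gen p) (delta_mono m).
Proof. by []. Qed.

Lemma canon_monoP m1 m2 : reflect (canon_mono m1 = canon_mono m2) (perm_eq m1 m2).
Proof.
apply: perm_sortP => [p q | q p r | p q /anti_leq /(pcan_inj (@pickleK _)) //].
- exact: leq_total.
- exact: leq_trans.
Qed.

Lemma tens_equivE x y : tens_equiv x y = (canon x == canon y).
Proof.
rewrite /tens_equiv /canon xpair_eqE.
by apply/andP/andP => [[/canon_monoP -> /canon_monoP ->] | [/eqP/canon_monoP ? /eqP/canon_monoP ?]].
Qed.

Lemma coef_count (k : nzRingType) b s : coef k b s = ((count (pred1 (canon b)) (map canon s))%:R)%R.
Proof.
rewrite /coef count_map; elim: s => [|x s IHs]; first by rewrite big_nil.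
by rewrite big_cons IHs /= natrD tens_equivE.
Qed.

Lemma eq_sum_coef (k : nzRingType) b s1 s2 : eq_sum s1 s2 -> coef k b s1 = coef k b s2.
Proof. by rewrite !coef_count => /permP ->. Qed.

Lemma canon_cat x y :
  canon (x.1 ++ y.1, x.2 ++ y.2) = canon ((canon x).1 ++ (canon y).1, (canon x).2 ++ (canon y).2).
Proof. by congr pair; apply/canon_monoP; apply: perm_cat; rewrite perm_sym perm_sort. Qed.

Lemma eq_sum_mul s1 s2 t1 t2 :
  eq_sum s1 t1 -> eq_sum s2 t2 -> eq_sum (tens_mul s1 s2) (tens_mul t1 t2).
Proof.
move=> eq1 eq2; rewrite /eq_sum /tens_mul !map_allpairs.
have mul_canon s t : [seq canon (x.1 ++ y.1, x.2 ++ y.2) | x <- s, y <- t] =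
    [seq canon (x.1 ++ y.1, x.2 ++ y.2) | x <- map canon s, y <- map canon t].
  by rewrite allpairs_mapl allpairs_mapr; apply: eq_allpairs => x y; rewrite canon_cat.
by rewrite (mul_canon s1) (mul_canon t1); apply: perm_allpairs.
Qed.

Section BlockDecomposition.
Variable n : nat.
Variables P Q : {set {set 'I_n}}.
Hypotheses (ncpP : is_ncp P) (ncpQ : is_ncp Q) (lePQ : ncp_le P Q).
Let partP : partition P setT := proj1 (andP ncpP).
Let partQ : partition Q setT := proj1 (andP ncpQ).
Implicit Types (t : {set 'I_n}) (ts : seq {set 'I_n}) (B C : {set 'I_n}).
Implicit Types (L M : {set {set 'I_n}}).

Definition coarsenings t : seq {set {set 'I_n}} :=
  [seq lift t Q' | Q' <- ncp_above (induced t P)].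

Section Coarsening.
Variables (t : {set 'I_n}) (L : {set {set 'I_n}}).
Hypotheses (Qt : t \in Q) (coarseL : L \in coarsenings t).

Lemma coarseningP : exists Q', [/\ L = lift t Q', is_ncp Q' & ncp_le (induced t P) Q'].
Proof. by case/mapP: coarseL => Q'; rewrite mem_ncp_above => /andP [? ?] ->; exists Q'. Qed.

Lemma coarsening_sub B : B \in L -> B \subset t.
Proof.
have [Q' [-> _ _]] := coarseningP.
by case/imsetP => B' _ ->; apply/subsetP => _ /imsetP [i _ ->]; apply: emb_mem.
Qed.

Lemma coarsening_neq0 B : B \in L -> B != set0.
Proof.
have [Q' [-> /andP [partQ' _] _]] := coarseningP.
by case/imsetP => B' Q'B' ->; rewrite imset_eq0 (partition_block_neq0 partQ').
Qed.

Lemma coarsening_cover x : x \in t -> exists2 B, B \in L & x \in B.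
Proof.
have [Q' [-> /andP [partQ' _] _]] := coarseningP; case/emb_onto => i ->.
have [B' Q'B' B'i] := partition_cover i partQ'.
by exists (emb t @: B'); apply: imset_f.
Qed.

Lemma coarsening_block_eq B C x : B \in L -> C \in L -> x \in B -> x \in C -> B = C.
Proof.
have [Q' [-> /andP [partQ' _] _]] := coarseningP.
move=> /imsetP [B' Q'B' ->] /imsetP [C' Q'C' ->] /imsetP [i B'i ->].
rewrite (mem_imset _ _ (@emb_inj _ t)) => C'i.
by rewrite (partition_block_eq partQ' Q'B' Q'C' B'i C'i).
Qed.

Lemma coarsening_noncrossing : noncrossing L.
Proof.
have [Q' [-> /andP [_ /noncrossingP ncQ'] _]] := coarseningP.
apply/noncrossingP => _ _ a b c d /imsetP [B' Q'B' ->] /imsetP [C' Q'C' ->] neqBC.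
move=> + + /imsetP [a' B'a' Ea] /imsetP [b' B'b' Eb] /imsetP [c' C'c' Ec] /imsetP [d' C'd' Ed].
rewrite Ea Eb Ec Ed !ltn_emb => acb bd; apply: (ncQ' B' C' a' b' c' d') => //.
by apply: contraNneq neqBC => ->.
Qed.

Lemma coarsening_coarser B B0 x : B \in L -> B0 \in P -> x \in B -> x \in B0 -> B0 \subset B.
Proof.
have [Q' [-> /andP [partQ' _] leQ']] := coarseningP.
move=> /imsetP [B' Q'B' ->] PB0 /imsetP [i B'i ->] B0i.
have B0t : B0 \subset t := ncp_le_block_sub partP partQ lePQ PB0 Qt B0i (emb_mem i).
have partPt : partition (induced t P) setT by case/andP: (is_ncp_induced t ncpP).
have PtB0 : emb t @^-1: B0 \in induced t P.
  by apply: mem_induced => //; apply/set0Pn; exists (emb t i); rewrite inE B0i emb_mem.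
have B0i' : i \in emb t @^-1: B0 by rewrite inE.
have B0B' := ncp_le_block_sub partPt partQ' leQ' PtB0 Q'B' B0i' B'i.
by rewrite -(setIidPl B0t) -imset_emb_preimset imsetS.
Qed.

End Coarsening.

(* The same fold as [delta_mono]: a union of one coarsening per block, for
   every choice of the coarsenings. *)
Definition interval_prod ts : seq {set {set 'I_n}} :=
  foldr (fun t acc => [seq L :|: M | L <- coarsenings t, M <- acc]) [:: set0] ts.

Lemma mem_interval_prodE ts M : uniq ts -> M \in interval_prod ts ->
  exists2 Lf : {set 'I_n} -> {set {set 'I_n}},
    {in ts, forall t, Lf t \in coarsenings t} & M = \bigcup_(t <- ts) Lf t.
Proof.
elim: ts M => [|t ts IHts] M /=.
  by rewrite inE => _ /eqP ->; exists (fun=> set0); rewrite ?big_nil.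
case/andP => t_ts uniq_ts /allpairsP [[L M'] /= [coarseL M'ts ->]].
have [Lf coarseLf ->] := IHts M' uniq_ts M'ts.
exists (fun u => if u == t then L else Lf u).
  by move=> u; rewrite inE; case: eqP => [-> //|_ /= /coarseLf].
rewrite big_cons eqxx; congr (_ :|: _); rewrite !big_seq; apply: eq_bigr => u ts_u.
by case: eqP => // equ; move: t_ts; rewrite -equ ts_u.
Qed.

Lemma mem_interval_prodI ts (Lf : {set 'I_n} -> {set {set 'I_n}}) :
  {in ts, forall t, Lf t \in coarsenings t} -> \bigcup_(t <- ts) Lf t \in interval_prod ts.
Proof.
elim: ts => [|t ts IHts] coarseLf /=; first by rewrite big_nil mem_head.
rewrite big_cons; apply/allpairsP; exists (Lf t, \bigcup_(u <- ts) Lf u); split => //=.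
  by apply: coarseLf; rewrite mem_head.
by apply: IHts => u ts_u; apply: coarseLf; rewrite inE ts_u orbT.
Qed.

Lemma interval_prod_block ts M B : uniq ts -> {subset ts <= Q} ->
  M \in interval_prod ts -> B \in M -> exists2 t, t \in ts & (B \subset t) && (B != set0).
Proof.
move=> uniq_ts tsQ /(mem_interval_prodE uniq_ts) [Lf coarseLf ->].
rewrite bigcup_seq => /bigcupP [t ts_t LfB]; exists t => //.
by rewrite (coarsening_sub (coarseLf t ts_t) LfB) (coarsening_neq0 (coarseLf t ts_t) LfB).
Qed.

Lemma interval_prod_disjoint ts M t B : uniq ts -> {subset ts <= Q} -> t \in Q -> t \notin ts ->
  M \in interval_prod ts -> B \in M -> B :&: t = set0.
Proof.
move=> uniq_ts tsQ Qt t_ts Mts MB.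
have [u ts_u /andP [Bu _]] := interval_prod_block uniq_ts tsQ Mts MB.
by apply: (partition_disjoint partQ (tsQ u ts_u) Qt) Bu; apply: contraNneq t_ts => <-.
Qed.

Lemma coarsenings_uniq t : uniq (coarsenings t).
Proof.
rewrite map_inj_in_uniq; first exact/filter_uniq/enum_uniq.
move=> Q1 Q2; rewrite !mem_ncp_above.
move=> /andP [/andP [/and3P [_ _ Q1_0] _] _] /andP [/andP [/and3P [_ _ Q2_0] _] _] eq12.
by rewrite -(induced_lift Q1_0) eq12 induced_lift.
Qed.

Lemma interval_prod_uniq ts : uniq ts -> {subset ts <= Q} -> uniq (interval_prod ts).
Proof.
elim: ts => [//|t ts IHts] /andP [t_ts uniq_ts] tsQ /=.
have Qt : t \in Q by apply: tsQ; rewrite mem_head.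
have tsQ' : {subset ts <= Q} by move=> u ts_u; apply: tsQ; rewrite inE ts_u orbT.
apply: allpairs_uniq; [exact: coarsenings_uniq | exact: IHts |].
have notsub M B : M \in interval_prod ts -> B \in M -> ~~ (B \subset t).
  move=> Mts MB; apply/negP => Bt.
  have [_ _ /andP [_]] := interval_prod_block uniq_ts tsQ' Mts MB.
  by rewrite -(setIidPl Bt) (interval_prod_disjoint uniq_ts tsQ' Qt t_ts Mts MB) eqxx.
have splitLM L M : L \in coarsenings t -> M \in interval_prod ts ->
    L = [set B in L :|: M | B \subset t] /\ M = [set B in L :|: M | ~~ (B \subset t)].
  move=> coarseL Mts; split; apply/setP => B; rewrite !inE.
    case LB: (B \in L); first by rewrite (coarsening_sub coarseL LB).
    by case MB: (B \in M); rewrite // (negbTE (notsub _ _ Mts MB)).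
  case MB: (B \in M); first by rewrite orbT (notsub _ _ Mts MB).
  by case LB: (B \in L); rewrite // (coarsening_sub coarseL LB).
move=> [L1 M1] [L2 M2] /allpairsP [[L1' M1'] [/= coarseL1 M1ts [-> ->]]].
move=> /allpairsP [[L2' M2'] [/= coarseL2 M2ts [-> ->]]] /= eqLM.
have [EL1 EM1] := splitLM _ _ coarseL1 M1ts; have [EL2 EM2] := splitLM _ _ coarseL2 M2ts.
by congr pair; [rewrite EL1 EL2 eqLM | rewrite EM1 EM2 eqLM].
Qed.

Section Glue.
Variable Lf : {set 'I_n} -> {set {set 'I_n}}.
Hypothesis coarseLf : forall t, t \in Q -> Lf t \in coarsenings t.
Local Notation M := (\bigcup_(t in Q) Lf t).

Lemma glue_block_sub B t : t \in Q -> B \in Lf t -> B \subset t.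
Proof. by move=> Qt LfB; rewrite (coarsening_sub (coarseLf Qt) LfB). Qed.

Lemma glue_partition : partition M setT.
Proof.
apply: partitionT_intro.
- move=> x; have [t Qt tx] := partition_cover x partQ.
  have [B LfB Bx] := coarsening_cover (coarseLf Qt) tx.
  by exists B => //; apply/bigcupP; exists t.
- move=> B C x /bigcupP [t1 Qt1 LfB] /bigcupP [t2 Qt2 LfC] Bx Cx.
  have Bt1 := glue_block_sub Qt1 LfB; have Ct2 := glue_block_sub Qt2 LfC.
  have eqt := partition_block_eq partQ Qt1 Qt2 (subsetP Bt1 x Bx) (subsetP Ct2 x Cx).
  by move: LfC; rewrite -eqt => LfC; exact: (coarsening_block_eq (coarseLf Qt1) LfB LfC Bx Cx).
apply/bigcupP => [[t Qt Lf0]].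
by have := coarsening_neq0 (coarseLf Qt) Lf0; rewrite eqxx.
Qed.

Lemma glue_noncrossing : noncrossing M.
Proof.
apply/noncrossingP => B C a b c d /bigcupP [t1 Qt1 LfB] /bigcupP [t2 Qt2 LfC] neqBC acb bd.
move=> aB bB cC dC; have Bt1 := glue_block_sub Qt1 LfB; have Ct2 := glue_block_sub Qt2 LfC.
have [eqt | neqt] := eqVneq t1 t2.
  move: LfC; rewrite -eqt => LfC.
  have /noncrossingP ncL := coarsening_noncrossing (coarseLf Qt1).
  exact: (ncL B C a b c d LfB LfC neqBC acb bd aB bB cC dC).
have /andP [_ /noncrossingP ncQ] := ncpQ.
apply: (ncQ t1 t2 a b c d Qt1 Qt2 neqt acb bd).
all: by [apply: (subsetP Bt1) | apply: (subsetP Ct2)].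
Qed.

Lemma le_glue : ncp_le P M.
Proof.
apply/(ncp_leP partP glue_partition) => B0 PB0.
have /set0Pn [x B0x] := partition_block_neq0 partP PB0.
have [B MB Bx] := partition_cover x glue_partition; exists B => //.
case/bigcupP: MB => t Qt LfB.
exact: (coarsening_coarser Qt (coarseLf Qt) LfB PB0 Bx B0x).
Qed.

Lemma glue_le : ncp_le M Q.
Proof.
apply/(ncp_leP glue_partition partQ) => B /bigcupP [t Qt LfB].
by exists t => //; apply: glue_block_sub LfB.
Qed.

Lemma glue_interval : M \in ncp_interval P Q.
Proof. by rewrite mem_ncp_interval /is_ncp glue_partition glue_noncrossing le_glue glue_le. Qed.

End Glue.

Lemma blocks_coarsening M t : M \in ncp_interval P Q -> t \in Q ->
  [set C in M | C \subset t] \in coarsenings t.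
Proof.
rewrite mem_ncp_interval => /and3P [ncpM lePM leMQ] Qt; have partM := proj1 (andP ncpM).
have -> : [set C in M | C \subset t] = lift t (induced t M).
  rewrite lift_induced; apply/setP => C; rewrite inE.
  apply/andP/imsetP => [[MC Ct] | [C' /[!inE] /andP [MC' /set0Pn [x /setIP [C'x tx]]] ->]].
    exists C; last by rewrite (setIidPl Ct).
    by rewrite inE MC (setIidPl Ct) (partition_block_neq0 partM MC).
  have C't := ncp_le_block_sub partM partQ leMQ MC' Qt C'x tx.
  by rewrite (setIidPl C't).
apply: map_f; rewrite mem_ncp_above is_ncp_induced //=.
have partPt : partition (induced t P) setT by case/andP: (is_ncp_induced t ncpP).
have partMt : partition (induced t M) setT by case/andP: (is_ncp_induced t ncpM).
apply/(ncp_leP partPt partMt) => _ /imsetP [B0 /[!inE] /andP [PB0 B0t] ->].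
have [C MC B0C] := (ncp_leP partP partM lePM) B0 PB0.
exists (emb t @^-1: C); last exact: preimsetS.
apply: mem_induced => //; apply: contraNneq B0t => Ct0.
by rewrite -subset0 -Ct0 setSI.
Qed.

Lemma mem_interval_prod_enum M : (M \in interval_prod (enum Q)) = (M \in ncp_interval P Q).
Proof.
have bigcup_enum (F : {set 'I_n} -> {set {set 'I_n}}) :
    \bigcup_(t <- enum Q) F t = \bigcup_(t in Q) F t.
  by rewrite bigcup_seq; apply: eq_bigl => t; rewrite mem_enum.
apply/idP/idP => [| MPQ].
  case/(mem_interval_prodE (enum_uniq _)) => Lf coarseLf ->; rewrite bigcup_enum.
  by apply: glue_interval => t Qt; apply: coarseLf; rewrite mem_enum.
have partM : partition M setT by move: MPQ; rewrite mem_ncp_interval => /and3P [/andP []].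
have -> : M = \bigcup_(t <- enum Q) [set C in M | C \subset t].
  rewrite bigcup_enum; apply/setP => C.
  apply/idP/bigcupP => [MC | [t _]]; last by rewrite inE => /andP [].
  move: MPQ; rewrite mem_ncp_interval => /and3P [_ _ /(ncp_leP partM partQ) leMQ].
  by have [t Qt Ct] := leMQ C MC; exists t; rewrite // inE MC.
by apply: mem_interval_prodI => t; rewrite mem_enum; apply: blocks_coarsening.
Qed.

Lemma perm_interval_prod : perm_eq (interval_prod (enum Q)) (ncp_interval P Q).
Proof.
apply: uniq_perm; last exact: mem_interval_prod_enum.
  by apply: interval_prod_uniq (enum_uniq _) _ => t; rewrite mem_enum.
by rewrite filter_uniq ?enum_uniq.
Qed.

Lemma delta_gen_restr t :
  eq_sum (delta_gen (restr P t)) [seq ([:: restr L t], quot P L) | L <- coarsenings t].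
Proof.
rewrite /eq_sum restrE /coarsenings -!map_comp.
apply/permP => x; congr (count _ _); apply/eq_in_map => Q'.
rewrite mem_ncp_above => /andP [/andP [/and3P [_ _ Q'0] _] _] /=.
rewrite restrE induced_lift // /canon /=; congr pair; apply/canon_monoP.
exact: perm_quot_lift.
Qed.

Definition lat_term ts M : tens := ([seq restr M t | t <- ts], quot P M).

Lemma canon_lat_term_cons t ts L M : t \in Q -> t \notin ts -> uniq ts -> {subset ts <= Q} ->
  L \in coarsenings t -> M \in interval_prod ts ->
  canon (restr L t :: [seq restr M u | u <- ts], quot P L ++ quot P M) =
  canon (lat_term (t :: ts) (L :|: M)).
Proof.
move=> Qt t_ts uniq_ts tsQ coarseL Mts.
have disjM B : B \in M -> B :&: t = set0.
  exact: (interval_prod_disjoint uniq_ts tsQ Qt t_ts Mts).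
have disjL u B : u \in ts -> B \in L -> B :&: u = set0.
  move=> ts_u LB; apply: partition_disjoint partQ Qt (tsQ u ts_u) _ (coarsening_sub coarseL LB).
  by apply: contraNneq t_ts => ->.
rewrite /lat_term /canon /= restr_setU //; congr (canon_mono (_ :: _), _).
  by apply/eq_in_map => u ts_u; rewrite setUC restr_setU // => B; apply: disjL.
apply/canon_monoP; rewrite perm_sym quot_setU //.
apply/pred0P => B /=; apply/negbTE/negP => /andP [LB MB].
have := coarsening_neq0 coarseL LB.
by rewrite -(setIidPl (coarsening_sub coarseL LB)) (disjM B MB) eqxx.
Qed.

Lemma delta_mono_restr ts : uniq ts -> {subset ts <= Q} ->
  eq_sum (delta_mono [seq restr P t | t <- ts]) [seq lat_term ts M | M <- interval_prod ts].
Proof.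
elim: ts => [|t ts IHts]; first by rewrite /= /lat_term /quot enum_set0.
case/andP => t_ts uniq_ts tsQ; have Qt : t \in Q by apply: tsQ; rewrite mem_head.
have tsQ' : {subset ts <= Q} by move=> u ts_u; apply: tsQ; rewrite inE ts_u orbT.
rewrite [map _ _]/= delta_mono_cons.
apply: perm_trans (eq_sum_mul (delta_gen_restr t) (IHts uniq_ts tsQ')) _.
rewrite /tens_mul allpairs_mapl allpairs_mapr !map_allpairs.
apply/permP => x; congr (count _ _); apply/eq_in_allpairs => L M coarseL Mts.
exact: canon_lat_term_cons.
Qed.

Lemma delta_quot : eq_sum (delta_mono (quot P Q)) (lat_delta_Phi P Q).
Proof.
apply: perm_trans (delta_mono_restr (enum_uniq Q) _) _ => [t | ]; first by rewrite mem_enum.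
by rewrite /eq_sum /lat_delta_Phi; apply/perm_map/perm_map/perm_interval_prod.
Qed.

Lemma card_induced_eq1 t : t \in Q -> (#|induced t P| == 1%N) = (t \in P).
Proof.
move=> Qt; apply/idP/idP => [/cards1P [Z PtZ] | Pt]; last first.
  by rewrite (induced_block partP Pt) cards1.
have /set0Pn [x tx] := partition_block_neq0 partQ Qt.
have [B PB Bx] := partition_cover x partP.
have PtB C y : C \in P -> y \in C -> y \in t -> emb t @^-1: C = Z.
  move=> PC Cy ty; apply/set1P; rewrite -PtZ; apply: mem_induced => //.
  by apply/set0Pn; exists y; rewrite inE Cy ty.
suff -> : t = B by [].
apply/eqP; rewrite eqEsubset (ncp_le_block_sub partP partQ lePQ PB Qt Bx tx) andbT.
apply/subsetP => y ty; have [C PC Cy] := partition_cover y partP.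
have [j Ej] := emb_onto ty; have : j \in emb t @^-1: C by rewrite inE -Ej.
by rewrite (PtB C y) // -(PtB B x) // inE -Ej.
Qed.

End BlockDecomposition.

Lemma prodr_natb (R : nzSemiRingType) (T : Type) (s : seq T) (b : pred T) :
  (\prod_(x <- s) (b x)%:R = (all b s)%:R :> R)%R.
Proof.
by elim: s => [|x s IHs]; rewrite ?big_nil ?big_cons //= IHs -natrM mulnb.
Qed.

Lemma eps_mono_quot (k : nzRingType) n (P Q : {set {set 'I_n}}) :
  is_ncp P -> is_ncp Q -> ncp_le P Q -> eps_mono k (quot P Q) = ((P == Q)%:R)%R.
Proof.
move=> ncpP ncpQ lePQ; rewrite /eps_mono prodr_natb all_map; congr ((nat_of_bool _)%:R)%R.
rewrite (eq_in_all (a2 := mem P)) => [|t]; last first.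
  rewrite mem_enum => Qt; rewrite -[preim _ _ t]/(#|tagged (restr P t)| == 1%N).
  by rewrite restrE (card_induced_eq1 ncpP ncpQ lePQ Qt).
rewrite -subset_all (eq_subset (mem_enum Q)).
apply/idP/eqP => [QP | <-]; last exact: subxx.
by apply: partition_sub_eq QP; [case/andP: ncpP | case/andP: ncpQ].
Qed.

Unset Implicit Arguments.
Local Open Scope ring_scope.

Theorem mainTheorem6 (k : fieldType) (n : nat) (P Q : {set {set 'I_n}}) :
  (0 < n)%N -> is_ncp P -> is_ncp Q -> ncp_le P Q ->
  (forall b : tens, coef k b (delta_mono (quot P Q)) = coef k b (lat_delta_Phi P Q))
  /\ eps_mono k (quot P Q) = (P == Q)%:R.
Proof.
move=> _ ncpP ncpQ lePQ; split; last exact: eps_mono_quot.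
by move=> b; apply/eq_sum_coef/delta_quot.
Qed.
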